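(* Let $G$ be a connected block graph with blocks $B_1, B_2,\ldots, B_t$, and let $k\ge 2$ be an integer. Then $$SW_k(G) = \sum_{i=1}^t N_k'(G \setminus B_i).$$
   Context: All graphs are finite, simple, undirected. A block of a graph is a maximal connected induced subgraph without cut vertices; a block graph is a graph in which every block is a complete graph (clique). For a connected graph $G$ and $S\subseteq V(G)$, the Steiner distance $d(S)$ is the minimum number of edges of a connected subgraph of $G$ whose vertex set contains $S$. The Steiner $k$-Wiener index is $SW_k(G)=\sum_{S\subseteq V(G),\,|S|=k} d(S)$. For a block $B_i$, $G\setminus B_i$ denotes the graph obtained from $G$ by deleting all edges of $B_i$ (keeping all vertices). For a graph $H$ with connected components $H_1,\dots,H_p$ (with $n(H_j)=|V(H_j)|$), and a tuple $(l_1,\dots,l_p)$ of nonnegative integers, let $\alpha(l_1,\dots,l_p)$ be the number of nonzero $l_j$ minus $1$. Define $$N_k'(H)=\sum_{\substack{l_1+\cdots+l_p=k\\ 0\le l_1,\dots,l_p<k}} \binom{n(H_1)}{l_1}\cdots\binom{n(H_p)}{l_p}\,\alpha(l_1,\dots,l_p)$$ if $p>1$, and $N_k'(H)=0$ if $H$ is connected. Conventions: $\binom{m}{0}=1$ and $\binom{m}{l}=0$ whenever $m<l$. *)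

From mathcomp Require Import all_boot.
Set Implicit Arguments. Unset Strict Implicit. Unset Printing Implicit Defensive.

Definition simple_graph (T : finType) (e : rel T) : Prop :=
  symmetric e /\ irreflexive e.

Definition connected_graph (T : finType) (e : rel T) : bool :=
  [forall x, forall y, connect e x y].

Definition induced_rel (T : finType) (e : rel T) (A : {set T}) : rel T :=
  fun x y => [&& e x y, x \in A & y \in A].

Definition induced_connected (T : finType) (e : rel T) (A : {set T}) : bool :=
  [forall x in A, forall y in A, connect (induced_rel e A) x y].

Definition cut_vertex_of (T : finType) (e : rel T) (A : {set T}) (v : T) : bool :=
  (v \in A) && ~~ induced_connected e (A :\ v).

Definition nonseparable (T : finType) (e : rel T) (A : {set T}) : bool :=
  induced_connected e A && [forall v, ~~ cut_vertex_of e A v].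

Definition is_block (T : finType) (e : rel T) (B : {set T}) : bool :=
  [&& B != set0, nonseparable e B &
      [forall B' : {set T}, (B \proper B') ==> ~~ nonseparable e B']].

Definition block_graph (T : finType) (e : rel T) : bool :=
  [forall B : {set T}, is_block e B ==>
     [forall x in B, forall y in B, (x != y) ==> e x y]].

(* G \ B : delete the edges of the block B (all vertices kept). *)
Definition del_block_edges (T : finType) (e : rel T) (B : {set T}) : rel T :=
  fun x y => e x y && ~~ ((x \in B) && (y \in B)).

(* Edges are represented as 2-element vertex sets.
   The default value #|{set T}| is an upper bound for #|F| for every
   candidate F, so it does not affect the minimum when one exists. *)
Definition steiner_admissible (T : finType) (e : rel T) (S : {set T})
    (p : {set T} * {set {set T}}) : bool :=
  let U := p.1 in let F := p.2 in
  [&& S \subset U,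
      [forall f in F, exists x, exists y,
          [&& f == [set x; y], e x y, x \in U & y \in U]] &
      [forall x in U, forall y in U,
          connect (fun a b => [set a; b] \in F) x y]].

Definition steiner_dist (T : finType) (e : rel T) (S : {set T}) : nat :=
  \big[minn/#|{set T}|]_(p : {set T} * {set {set T}} | steiner_admissible e S p)
     #|p.2|.

Definition steiner_wiener (T : finType) (e : rel T) (k : nat) : nat :=
  \sum_(S : {set T} | #|S| == k) steiner_dist e S.

Definition components (T : finType) (e : rel T) : {set {set T}} :=
  [set [set y | connect e x y] | x : T].

(* N'_k(H): tuples (l_C)_{C component} with 0 <= l_C < k (encoded as a
   finite function into 'I_k, zero outside the components) summing to k,
   weighted by prod_C binom(|C|, l_C) * (#{C | l_C <> 0} - 1). *)
Definition Nprime (T : finType) (h : rel T) (k : nat) : nat :=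
  let C := components h in
  if 1 < #|C| then
    \sum_(l : {ffun {set T} -> 'I_k} |
            [forall X, (X \notin C) ==> (val (l X) == 0)] &&
            (\sum_(X in C) val (l X) == k))
      ((\prod_(X in C) 'C(#|X|, val (l X))) *
       (#|[set X in C | val (l X) != 0]| - 1))
  else 0.

From mathcomp Require Import all_boot.
Set Implicit Arguments. Unset Strict Implicit. Unset Printing Implicit Defensive.

(* 1. Blocks of a block graph: every edge lies in a block, two blocks share
      at most one vertex, distinct vertices of a block B lie in distinct
      components of G \ B (the branches of B), and in a connected graph
      every vertex reaches B inside G \ B.  The key step is that a walk in
      G \ B between two vertices of B would form, with the clique B, a
      larger nonseparable set.
   2. Steiner distance: call b in B an attachment vertex of S at B when the
      branch of B at b meets S.  For nonempty S,
        d(S) = sum over blocks B of (#attachment vertices of S at B - 1).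
      Lower bound: the edges inside B of any connected subgraph containing
      S connect the attachment vertices at B.  Upper bound: the union over
      blocks of stars on the attachment vertices is such a subgraph.
   3. Counting by profiles: for any graph H, the sum over k-sets S of
      (#components of H met by S - 1) is N'_k(H); group the sets S by
      their numbers of vertices in each component.
   Attachment vertices of S at B correspond to components of G \ B met by
   S, so summing 2 over k-sets and exchanging the sums yields the theorem. *)

Section Walks.
Variable T : finType.
Implicit Types (e r : rel T) (A B R V : {set T}).

Lemma induced_rel_sym e A : symmetric e -> symmetric (induced_rel e A).
Proof.
by move=> se x y; rewrite /induced_rel se; case: (x \in A); case: (y \in A); rewrite ?andbF.
Qed.

Lemma connect_endpoints r R x y : symmetric r -> (forall a b, r a b -> a \in R) ->
  connect r x y -> x != y -> (x \in R) && (y \in R).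
Proof.
move=> sr rR.
have start : forall a b, connect r a b -> a != b -> a \in R.
  move=> a b /connectP[[|z p] /=]; first by move=> _ ->; rewrite eqxx.
  by case/andP=> /rR.
move=> cxy nxy; rewrite (start _ _ cxy nxy) (start y x) // 1?eq_sym //.
by rewrite (sym_connect_sym sr).
Qed.

Lemma induced_connect_mem e A x y : symmetric e ->
  connect (induced_rel e A) x y -> x != y -> (x \in A) && (y \in A).
Proof.
move=> se; apply: connect_endpoints; first exact: induced_rel_sym.
by move=> a b /and3P[].
Qed.

Lemma induced_connected_from e A z0 : symmetric e -> z0 \in A ->
  (forall x, x \in A -> connect (induced_rel e A) z0 x) -> induced_connected e A.
Proof.
move=> se z0A H; apply/forallP => x; apply/implyP => xA; apply/forallP => y.
apply/implyP => yA; apply: (connect_trans (y := z0)); last exact: H.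
by rewrite (sym_connect_sym (induced_rel_sym _ se)) H.
Qed.

Lemma induced_connect_sub e A B x y : A \subset B ->
  connect (induced_rel e A) x y -> connect (induced_rel e B) x y.
Proof.
move=> AB; apply: connect_sub => a b /and3P[eab aA bA]; apply: connect1.
by rewrite /induced_rel eab (subsetP AB _ aA) (subsetP AB _ bA).
Qed.

Lemma path_induced e A x p : path e x p -> {subset x :: p <= A} ->
  path (induced_rel e A) x p.
Proof.
elim: p x => //= y p IH x /andP[exy pp] sub; rewrite /induced_rel exy.
rewrite !sub ?inE ?eqxx ?orbT //=.
by apply: IH => // z zin; apply: sub; rewrite inE zin orbT.
Qed.

Lemma path_connect_induced e A x p : path e x p -> {subset x :: p <= A} ->
  forall y, y \in x :: p -> connect (induced_rel e A) x y.
Proof. by move=> pp sub; apply: path_connect; apply: path_induced. Qed.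

(* Deleting a vertex v from a duplicate-free walk x :: p inside v |: V cuts
   it into at most two pieces: every other vertex of the walk is joined
   inside V to the start or to the end of the walk. *)
Lemma path_minus_vertex e V v x p : symmetric e -> v \notin V -> path e x p ->
  uniq (x :: p) -> {subset x :: p <= v |: V} ->
  forall y, y \in x :: p -> y != v ->
  connect (induced_rel e V) x y \/ connect (induced_rel e V) y (last x p).
Proof.
move=> se vV; have csym := sym_connect_sym (induced_rel_sym V se).
elim: p x => [|z p IH] x /=.
  by move=> _ _ _ y; rewrite inE => /eqP -> _; left.
case/andP=> exz pp /andP[xnin up] sub y yin yv.
have subz : {subset z :: p <= v |: V} by move=> a ain; apply: sub; rewrite inE ain orbT.
have [->|yx] := eqVneq y x; first by left.
have yin' : y \in z :: p by move: yin; rewrite inE (negbTE yx).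
have [xv|xv] := eqVneq x v.
  right; have subV : {subset z :: p <= V}.
    move=> a ain; have := sub a; rewrite inE ain orbT => /(_ isT).
    by rewrite !inE => /orP[av|//]; move: xnin; rewrite xv -(eqP av) ain.
  apply: (connect_trans (y := z)); last exact: path_connect_induced pp subV _ (mem_last _ _).
  by rewrite csym; exact: path_connect_induced pp subV _ yin'.
have xV : x \in V by have := sub x (mem_head _ _); rewrite !inE (negbTE xv).
case: (IH z pp up subz y yin' yv) => [czy|]; last by right.
have [zv|zv] := eqVneq z v.
  by have := induced_connect_mem se czy; rewrite zv (negbTE vV) eq_sym yv => /(_ isT).
have zV : z \in V by have := subz z (mem_head _ _); rewrite !inE (negbTE zv).
left; apply: (connect_trans (y := z)) => //; apply: connect1.
by rewrite /induced_rel exz xV zV.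
Qed.

Lemma connect_exit r R x y : connect r x y -> x \in R -> y \notin R ->
  exists a b, [/\ a \in R, b \notin R & r a b].
Proof.
case/connectP => p; elim: p x => [|z p IH] x /=; first by move=> _ -> ->.
case/andP=> rxz pp ly xR yR.
case zR: (z \in R); first exact: IH pp ly zR yR.
by exists x, z; rewrite zR.
Qed.

Definition edges_within (E : {set {set T}}) R := [set f in E | f \subset R].

Lemma edges_within_sub (E : {set {set T}}) R : edges_within E R \subset E.
Proof. by apply/subsetP => f; rewrite inE => /andP[]. Qed.

Section Reach.
Variables (E : {set {set T}}) (d0 : T).
Let r : rel T := fun a b => [set a; b] \in E.
Let reach := [set x | connect r d0 x].

Lemma reach_grow R : R \subset reach -> d0 \in R -> ~~ (reach \subset R) ->
  exists2 b, b \in reach :\: R & #|edges_within E R| < #|edges_within E (b |: R)|.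
Proof.
move=> Rreach d0R /subsetPn[y yreach yR].
have [a [b [aR bR rab]]] : exists a b, [/\ a \in R, b \notin R & [set a; b] \in E].
  by apply: connect_exit d0R yR; rewrite inE in yreach.
exists b.
  rewrite in_setD bR inE; apply: (connect_trans (y := a)); last exact: connect1.
  by have := subsetP Rreach a aR; rewrite inE.
apply: proper_card; rewrite properE; apply/andP; split.
  apply/subsetP => f; rewrite !inE => /andP[-> fR].
  by rewrite (subset_trans fR) // subsetUr.
apply/subsetPn; exists [set a; b].
  by rewrite inE rab /= subUset !sub1set !inE eqxx aR orbT.
by rewrite inE rab /= subUset !sub1set (negbTE bR) andbF.
Qed.

(* The vertices reachable from d0 along the edges of E are at most
   #|E| + 1 in number (a connected graph has at least |V| - 1 edges). *)
Lemma card_reach_edges : #|reach| <= #|E| + 1.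
Proof.
suff grow : forall n R, #|reach :\: R| <= n -> R \subset reach -> d0 \in R ->
    #|R| <= #|edges_within E R| + 1 -> #|reach| <= #|edges_within E reach| + 1.
  apply: leq_trans (grow _ [set d0] (leqnn _) _ _ _) _.
  - by rewrite sub1set inE connect0.
  - by rewrite inE.
  - by rewrite cards1 leq_addl.
  by rewrite leq_add2r subset_leq_card // edges_within_sub.
elim=> [|n IH] R.
  rewrite leqn0 cards_eq0 setD_eq0 => reachR Rreach _.
  by have -> : reach = R by apply/eqP; rewrite eqEsubset reachR Rreach.
move=> cardn Rreach d0R HR.
have [reachR|notR] := boolP (reach \subset R).
  by have -> : reach = R by apply/eqP; rewrite eqEsubset reachR Rreach.
have [b bnew more] := reach_grow Rreach d0R notR.
move: bnew; rewrite in_setD => /andP[bR breach].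
apply: (IH (b |: R)).
- rewrite -ltnS; apply: leq_trans cardn; apply: proper_card.
  rewrite properE setDS ?subsetUr //=; apply/subsetPn; exists b.
    by rewrite in_setD bR breach.
  by rewrite in_setD setU11.
- by rewrite subUset sub1set breach Rreach.
- by rewrite inE d0R orbT.
by rewrite cardsU1 bR add1n addn1 ltnS (leq_trans HR) // addn1.
Qed.

End Reach.

End Walks.

Definition is_clique (T : finType) (e : rel T) (A : {set T}) : Prop :=
  forall x y, x \in A -> y \in A -> x != y -> e x y.

Section Cliques.
Variables (T : finType) (e : rel T).
Hypothesis se : symmetric e.
Implicit Types (A B V : {set T}).

Lemma clique_connect_induced B V x y : is_clique e B ->
  x \in B -> y \in B -> x \in V -> y \in V -> connect (induced_rel e V) x y.
Proof.
move=> clB xB yB xV yV; have [->|nxy] := eqVneq x y; first exact: connect0.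
by apply: connect1; rewrite /induced_rel xV yV clB.
Qed.

Lemma clique_induced_connected A : is_clique e A -> induced_connected e A.
Proof.
move=> cl; apply/forallP => x; apply/implyP => xA; apply/forallP => y; apply/implyP => yA.
exact: (clique_connect_induced cl xA yA xA yA).
Qed.

Lemma clique_nonseparable A : is_clique e A -> nonseparable e A.
Proof.
move=> cl; rewrite /nonseparable clique_induced_connected //=; apply/forallP => v.
rewrite /cut_vertex_of negb_and negbK clique_induced_connected ?orbT // => x y.
by rewrite !in_setD1 => /andP[_ xA] /andP[_ yA]; apply: cl.
Qed.

Lemma nonseparable_setD1 A v : nonseparable e A -> induced_connected e (A :\ v).
Proof.
case/andP=> cA /forallP/(_ v); rewrite /cut_vertex_of negb_and negbK.
case/orP => // vA; suff -> : A :\ v = A by [].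
by apply/setP=> z; rewrite in_setD1; case: eqVneq => // ->; rewrite (negbTE vA).
Qed.

Lemma induced_connectedU A1 A2 r : r \in A1 -> r \in A2 -> induced_connected e A1 ->
  induced_connected e A2 -> induced_connected e (A1 :|: A2).
Proof.
move=> r1 r2 c1 c2; apply: (induced_connected_from (z0 := r)) => //; first by rewrite inE r1.
move=> x; rewrite inE => /orP[xA|xA].
  apply: (induced_connect_sub (A := A1)); first exact: subsetUl.
  by have := forallP c1 r; rewrite r1 => /forallP/(_ x); rewrite xA.
apply: (induced_connect_sub (A := A2)); first exact: subsetUr.
by have := forallP c2 r; rewrite r2 => /forallP/(_ x); rewrite xA.
Qed.

Lemma nonseparableU A1 A2 x y : nonseparable e A1 -> nonseparable e A2 -> x != y ->
  x \in A1 -> y \in A1 -> x \in A2 -> y \in A2 -> nonseparable e (A1 :|: A2).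
Proof.
move=> n1 n2 nxy x1 y1 x2 y2; apply/andP; split.
  by apply: (induced_connectedU (r := x)) => //; [case/andP: n1|case/andP: n2].
apply/forallP => v; rewrite /cut_vertex_of negb_and negbK; apply/orP; right.
rewrite setDUl; set r := if v == x then y else x.
have rv : r != v by rewrite /r; case: (eqVneq v x) => [->|vx]; rewrite eq_sym.
have r1 : r \in A1 :\ v by rewrite in_setD1 rv /r; case: (v == x).
have r2 : r \in A2 :\ v by rewrite in_setD1 rv /r; case: (v == x).
by apply: (induced_connectedU r1 r2); apply: nonseparable_setD1.
Qed.

(* Together with q, B still induces a nonseparable
   subgraph: after removing a vertex v, the two pieces of the ear remain
   attached to B. *)
Section Ear.
Variables (B : {set T}) (b w : T) (q : seq T).
Hypotheses (clB : is_clique e B) (bB : b \in B) (wB : w \in B).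
Hypotheses (pq : path e b (rcons q w)) (uq : uniq (b :: rcons q w)).

Lemma ear_sub : {subset b :: rcons q w <= B :|: [set z in q]}.
Proof.
move=> z; rewrite inE mem_rcons inE orbA => /orP[/orP[]/eqP->|zq].
- by rewrite inE bB.
- by rewrite inE wB.
by rewrite !inE zq orbT.
Qed.

Lemma ear_induced_connected : induced_connected e (B :|: [set z in q]).
Proof.
apply: (induced_connected_from (z0 := b)) => //; first by rewrite inE bB.
move=> z; rewrite !inE => /orP[zB|zq].
  by apply: (clique_connect_induced clB); rewrite ?inE ?bB ?zB.
by apply: (path_connect_induced pq ear_sub); rewrite inE mem_rcons inE zq !orbT.
Qed.

Lemma ear_minus_vertex v : induced_connected e ((B :|: [set z in q]) :\ v).
Proof.
set V := _ :\ v; have csym := sym_connect_sym (induced_rel_sym V se).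
have wb : w != b by move: uq; rewrite /= mem_rcons inE negb_or eq_sym => /andP[/andP[]].
have BV z : z \in B -> z != v -> z \in V by move=> zB zv; rewrite in_setD1 zv inE zB.
have vV : v \notin V by rewrite in_setD1 eqxx.
set r := if v == b then w else b.
have rB : r \in B by rewrite /r; case: (v == b).
have rv : r != v by rewrite /r; case: (eqVneq v b) => [->|vb] //; rewrite eq_sym.
apply: (induced_connected_from (z0 := r)); rewrite ?BV // => z zV.
move: (zV); rewrite in_setD1 => /andP[zv]; rewrite !inE => /orP[zB|zq].
  exact: (clique_connect_induced clB rB zB (BV _ rB rv) zV).
have earV : {subset b :: rcons q w <= v |: V}.
  by move=> a /ear_sub aA; rewrite !inE; case: eqVneq => //= _; move: aA; rewrite !inE.
have zear : z \in b :: rcons q w by rewrite inE mem_rcons inE zq !orbT.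
have := path_minus_vertex se vV pq uq earV zear zv; rewrite last_rcons /r.
case: eqVneq => [vb|vb] [cbz|czw].
- by have := induced_connect_mem se cbz; rewrite -vb (negbTE vV) eq_sym zv => /(_ isT).
- by rewrite csym.
- by [].
have [wv|wv] := eqVneq w v.
  by have := induced_connect_mem se czw; rewrite wv (negbTE vV) andbF zv => /(_ isT).
apply: (connect_trans (y := w)); last by rewrite csym.
by apply: (clique_connect_induced clB); rewrite ?BV // eq_sym.
Qed.

Lemma clique_ear_nonseparable : nonseparable e (B :|: [set z in q]).
Proof.
rewrite /nonseparable ear_induced_connected; apply/forallP => v.
by rewrite /cut_vertex_of negb_and negbK ear_minus_vertex orbT.
Qed.

End Ear.

End Cliques.

Section BlockStructure.
Variables (T : finType) (e : rel T).
Hypothesis se : symmetric e.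
Hypothesis bg : block_graph e.
Implicit Types (A B : {set T}).

Lemma del_block_edges_sym B : symmetric (del_block_edges e B).
Proof. by move=> x y; rewrite /del_block_edges se; case: (x \in B); case: (y \in B). Qed.

Lemma del_block_edges_sub B x y : del_block_edges e B x y -> e x y.
Proof. by case/andP. Qed.

Lemma block_clique B : is_block e B -> is_clique e B.
Proof.
move=> bB x y xB yB nxy; have := forallP bg B; rewrite bB /= => /forallP/(_ x).
by rewrite xB /= => /forallP/(_ y); rewrite yB nxy.
Qed.

Lemma block_maximal B A : is_block e B -> nonseparable e (B :|: A) -> A \subset B.
Proof.
case/and3P=> _ _ /forallP/(_ (B :|: A)) + nBA.
rewrite nBA implybF properE subsetUl /= negbK => /subsetP sub.
by apply/subsetP => z zA; apply: sub; rewrite inE zA orbT.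
Qed.

Lemma block_eq B1 B2 x y : is_block e B1 -> is_block e B2 -> x != y ->
  x \in B1 -> y \in B1 -> x \in B2 -> y \in B2 -> B1 = B2.
Proof.
move=> b1 b2 nxy x1 y1 x2 y2.
have nU : nonseparable e (B1 :|: B2).
  by apply: (nonseparableU se _ _ nxy) => //; [case/and3P: b1|case/and3P: b2].
apply/eqP; rewrite eqEsubset (block_maximal b2) 1?setUC ?(block_maximal b1) //.
Qed.

(* Every edge lies in a block: a largest nonseparable set containing it. *)
Lemma edge_in_block x y : e x y -> exists B, [/\ is_block e B, x \in B & y \in B].
Proof.
move=> exy.
have P0 : nonseparable e [set x; y] && ([set x; y] \subset [set x; y]).
  rewrite subxx andbT; apply: clique_nonseparable => a b.
  by rewrite !inE => /orP[]/eqP-> /orP[]/eqP->; rewrite ?eqxx // se.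
case: (@arg_maxnP _ [set x; y] (fun B => nonseparable e B && ([set x; y] \subset B))
   (fun B => #|B|) P0) => B /andP[nB sB] maxB.
exists B; have xB : x \in B by apply: (subsetP sB); rewrite !inE eqxx.
have yB : y \in B by apply: (subsetP sB); rewrite !inE eqxx orbT.
split=> //; apply/and3P; split => //; first by apply/set0Pn; exists x.
apply/forallP => B'; apply/implyP => pB'; apply/negP => nB'.
have := maxB B'; rewrite nB' (subset_trans sB (proper_sub pB')) => /(_ isT).
by rewrite /geq /= leqNgt proper_card.
Qed.

(* Distinct vertices of a block B lie in distinct components of G \ B:
   otherwise a shortest walk between them in G \ B would be an ear of the
   clique B, contradicting the maximality of B. *)
Lemma block_branches_disjoint B b b' : is_block e B -> b \in B -> b' \in B ->
  connect (del_block_edges e B) b b' -> b = b'.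
Proof.
move=> bB bin b'in /connectP[p0 pp0 lp0]; apply/eqP/negPn/negP => nbb'.
move: b'in nbb'; rewrite lp0; case: (shortenP pp0) => p pp up _ b'in nbb'.
have hasp : has (mem B) p.
  apply/hasP; exists (last b p) => //; move: (mem_last b p).
  by rewrite inE eq_sym (negbTE nbb').
case: (split_find hasp) pp up => w q r1 wB /hasPn qB pp up.
have {}wB : w \in B := wB.
have ppq : path (del_block_edges e B) b (rcons q w) by move: pp; rewrite cat_path => /andP[].
have ear : uniq (b :: rcons q w) by move: up; rewrite -cat_cons cat_uniq => /andP[].
have qne : q != [::].
  apply/negP => /eqP q0; move: ppq; rewrite q0 /= andbT /del_block_edges.
  by rewrite bin wB andbF.
have nA := clique_ear_nonseparable se (block_clique bB) bin wB
  (sub_path (@del_block_edges_sub B) ppq) ear.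
have [z zq] : exists z, z \in q by case: (q) qne => // z ? _; exists z; rewrite inE eqxx.
have := subsetP (block_maximal bB nA) z; rewrite inE zq => /(_ isT) zB.
by have := qB z zq; rewrite /= zB.
Qed.

Lemma reach_block B v : connected_graph e -> is_block e B ->
  exists2 b, b \in B & connect (del_block_edges e B) v b.
Proof.
move=> cg /and3P[/set0Pn[b0 b0B] _ _].
have := forallP cg v => /forallP/(_ b0) /connectP[p pp lp].
elim: p v pp lp => [|y p IH] v /=; first by move=> _ lp; exists v; [rewrite -lp|exact: connect0].
case/andP=> evy pp lp.
case vB: (v \in B); first by exists v => //; exact: connect0.
have [b bB cyb] := IH y pp lp.
exists b => //; apply: (connect_trans (y := y)) => //; apply: connect1.
by rewrite /del_block_edges evy vB.
Qed.

End BlockStructure.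

Lemma bigmin_le (I : finType) (P : pred I) (F : I -> nat) d i0 : P i0 ->
  \big[minn/d]_(i | P i) F i <= F i0.
Proof.
move=> Pi0; have : i0 \in index_enum I by rewrite mem_index_enum.
elim: (index_enum I) => //= j r IH; rewrite inE big_cons.
case/orP => [/eqP <-|i0r]; first by rewrite Pi0 geq_minl.
by case: ifP => _; [apply: leq_trans (geq_minr _ _) (IH i0r)|exact: IH].
Qed.

Lemma card_bigcup_le (T : finType) (I : finType) (P : pred I) (A : I -> {set T}) :
  #|\bigcup_(i | P i) A i| <= \sum_(i | P i) #|A i|.
Proof.
apply: (big_rec2 (fun (X : {set T}) n => #|X| <= n)); first by rewrite cards0.
by move=> i X n _ H; rewrite cardsU (leq_trans (leq_subr _ _)) // leq_add2l.
Qed.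

Section SteinerDistance.
Variables (T : finType) (e : rel T).
Hypothesis se : symmetric e.
Hypothesis ie : irreflexive e.
Hypothesis bg : block_graph e.
Hypothesis cg : connected_graph e.
Implicit Types (B S U : {set T}) (F : {set {set T}}).

(* The attachment vertices of S at the block B: those b in B whose branch
   (component of G \ B) meets S.  A Steiner tree of S must connect them. *)
Definition attachments B S :=
  [set b in B | [exists s in S, connect (del_block_edges e B) b s]].

Lemma attachments_sub B S u : u \in attachments B S -> u \in B.
Proof. by rewrite inE => /andP[]. Qed.

Lemma pair_edge x z a b : [set x; z] = [set a; b] -> e a b -> e x z.
Proof.
move=> E eab.
have xin : x \in [set a; b] by rewrite -E !inE eqxx.
have zin : z \in [set a; b] by rewrite -E !inE eqxx orbT.
have ain : a \in [set x; z] by rewrite E !inE eqxx.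
have bin : b \in [set x; z] by rewrite E !inE eqxx orbT.
move: xin zin; rewrite !inE => /orP[]/eqP xa /orP[]/eqP za; subst x z => //.
- by move: bin; rewrite !inE orbb => /eqP eb; move: eab; rewrite eb ie.
- by rewrite se.
- by move: ain; rewrite !inE orbb => /eqP ea; move: eab; rewrite ea ie.
Qed.

Lemma admissible_edge S U F x z : steiner_admissible e S (U, F) ->
  [set x; z] \in F -> e x z.
Proof.
case/and3P=> _ /forallP/(_ [set x; z]) H _ xzF; move: H; rewrite xzF /=.
by case/existsP=> a /existsP[b /and4P[/eqP E eab _ _]]; exact: pair_edge E eab.
Qed.

(* Each edge of an admissible subgraph lies in at most one block. *)
Lemma sum_edges_within_blocks S U F : steiner_admissible e S (U, F) ->
  \sum_(B | is_block e B) #|edges_within F B| <= #|F|.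
Proof.
move=> adm.
have E B : #|edges_within F B| = \sum_(f in F) (f \subset B).
  rewrite -sum1dep_card big_mkcondr /=; apply: eq_bigr => f _.
  by case: (f \subset B).
under eq_bigr do rewrite E.
rewrite exchange_big /= -sum1_card; apply: leq_sum => f fF.
rewrite -big_mkcondr /= sum1dep_card.
case/and3P: adm => _ /forallP/(_ f); rewrite fF /= => /existsP[x /existsP[y]].
case/and4P=> /eqP fE exy _ _ _.
have nxy : x != y by apply/eqP => xy; move: exy; rewrite xy ie.
apply/card_le1_eqP => B1 B2; rewrite !inE => /andP[b1 s1] /andP[b2 s2].
have inf z B : f \subset B -> z \in [set x; y] -> z \in B by rewrite -fE => /subsetP; apply.
have [xf yf] : x \in [set x; y] /\ y \in [set x; y] by rewrite !inE !eqxx orbT.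
by apply/esym/(block_eq se b1 b2 nxy); apply: inf.
Qed.

(* Along an F-walk the attachment points in B of its two ends are joined
   by F-edges inside B: an F-edge inside B moves the attachment point along
   itself, any other F-edge lies in G \ B and keeps it fixed. *)
Lemma attachment_walk F B x y a1 a2 :
  (forall u v, [set u; v] \in F -> e u v) -> is_block e B ->
  connect (fun u v => [set u; v] \in F) x y -> a1 \in B -> a2 \in B ->
  connect (del_block_edges e B) x a1 -> connect (del_block_edges e B) y a2 ->
  connect (fun u v => [set u; v] \in edges_within F B) a1 a2.
Proof.
move=> Fe bB /connectP[p pp ->] {y}.
have csym := sym_connect_sym (del_block_edges_sym se B).
have sep := block_branches_disjoint se bg bB.
elim: p x a1 pp => [|z p IH] x a1 /=.
  move=> _ a1B a2B cx1 cx2; suff -> : a1 = a2 by exact: connect0.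
  by apply: sep a1B a2B _; apply: (connect_trans (y := x)); rewrite // csym.
case/andP=> xz pp a1B a2B cx1 cx2.
have [az azB cz] := reach_block z cg bB.
apply: (connect_trans (y := az)); last exact: IH z az pp azB a2B cz cx2.
have [/andP[xB zB]|nxzB] := boolP ((x \in B) && (z \in B)).
  have <- : x = a1 by apply: sep.
  have <- : z = az by apply: sep.
  by apply: connect1; rewrite inE xz /= subUset !sub1set xB zB.
have hxz : del_block_edges e B x z by rewrite /del_block_edges Fe.
suff -> : a1 = az by exact: connect0.
apply: sep a1B azB _; apply: (connect_trans (y := x)); first by rewrite csym.
by apply: (connect_trans (y := z)) => //; apply: connect1.
Qed.

(* Hence the attachments of S at B are reached from one of them along
   the F-edges inside B, so they number at most those edges plus one. *)
Lemma card_attachments_le S U F B : steiner_admissible e S (U, F) -> is_block e B ->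
  #|attachments B S| <= #|edges_within F B| + 1.
Proof.
move=> adm bB.
have [->|/set0Pn[d0 d0D]] := eqVneq (attachments B S) set0; first by rewrite cards0.
apply: leq_trans (card_reach_edges (edges_within F B) d0).
apply/subset_leq_card/subsetP => b; rewrite !inE => /andP[bB' /existsP[s /andP[sS cbs]]].
move: d0D; rewrite inE => /andP[d0B /existsP[s0 /andP[s0S c0]]].
case/and3P: (adm) => SU _ /forallP/(_ s0) /implyP.
rewrite (subsetP SU _ s0S) => /(_ isT) /forallP/(_ s) /implyP.
rewrite (subsetP SU _ sS) => /(_ isT) cs0s.
have csym := sym_connect_sym (del_block_edges_sym se B).
apply: (attachment_walk _ bB cs0s) => //; try by rewrite csym.
by move=> u v; apply: admissible_edge adm.
Qed.

Lemma steiner_lower_bound S U F : steiner_admissible e S (U, F) ->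
  \sum_(B | is_block e B) (#|attachments B S| - 1) <= #|F|.
Proof.
move=> adm; apply: leq_trans (sum_edges_within_blocks adm); apply: leq_sum => B bB.
by rewrite leq_subLR addnC (card_attachments_le adm bB).
Qed.

End SteinerDistance.

Section StarTree.
Variables (T : finType) (e : rel T).
Hypothesis se : symmetric e.
Hypothesis bg : block_graph e.
Hypothesis cg : connected_graph e.
Implicit Types (B : {set T}).

Lemma path_del_block B x p : path e x p -> all (fun v => v \notin B) p ->
  path (del_block_edges e B) x p.
Proof.
elim: p x => //= y p IH x /andP[exy pp] /andP[yB ap].
by rewrite /del_block_edges exy (negbTE yB) andbF IH.
Qed.

Lemma last_block_entry B p : forall x, path e x p -> all (fun v => v \notin B) p \/
  exists w q, [/\ w \in B, path e w q, last w q = last x p,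
     all (fun v => v \notin B) q & size q < size p].
Proof.
elim: p => [|y p IH] x /=; first by left.
case/andP=> exy pp; case: (IH y pp) => [ap|[w [q [wB pq lq aq sq]]]].
  by case yB: (y \in B); [right; exists y, p|left; rewrite ap].
by right; exists w, q; split => //; rewrite ltnS ltnW.
Qed.

Lemma branch_transfer B B' u b' y : is_block e B -> is_block e B' -> B != B' ->
  u \in B -> u \in B' -> b' \in B' -> b' != u -> connect (del_block_edges e B') b' y ->
  connect (del_block_edges e B) u y.
Proof.
move=> bB bB' nBB' uB uB' b'B' nbu /connectP[p pp ->].
have notB z : z \in b' :: p -> z \notin B.
  move=> zin; apply/negP => zB.
  have cbz : connect (del_block_edges e B') b' z := path_connect pp zin.
  have cbu : connect (del_block_edges e B') b' u.
    have [<-//|zu] := eqVneq z u.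
    apply: (connect_trans cbz); apply: connect1.
    rewrite /del_block_edges (block_clique bg bB zB uB zu) uB' andbT /=.
    by apply: contraNN nBB' => zB'; apply/eqP; exact: (block_eq se bB bB' zu).
  by move: nbu; rewrite (block_branches_disjoint se bg bB' b'B' uB' cbu) eqxx.
have ph : path (del_block_edges e B) b' p.
  apply: path_del_block; first by apply: sub_path pp => ? ?; apply: del_block_edges_sub.
  by apply/allP => z zp; apply: notB; rewrite inE zp orbT.
apply: (connect_trans (y := b')); last exact: (path_connect ph (mem_last _ _)).
apply: connect1; rewrite /del_block_edges (block_clique bg bB' uB' b'B') 1?eq_sym //=.
by rewrite (negbTE (notB b' (mem_head _ _))) andbF.
Qed.

(* Upper bound: in every block B with at least two attachment vertices,
   join one of them (the center) to all the others. *)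
Section Upper.
Variables (S : {set T}) (s0 : T).
Hypothesis s0S : s0 \in S.
Local Notation att B := (attachments e B S).

Definition active B := is_block e B && (1 < #|att B|).
Definition center B := odflt s0 [pick x in att B].
Definition star B := [set [set center B; b] | b in att B :\ center B].
Definition star_edges := \bigcup_(B | active B) star B.
Definition star_vertices := S :|: \bigcup_(B | active B) att B.
Definition star_rel a b := [set a; b] \in star_edges.

Lemma center_in B : 0 < #|att B| -> center B \in att B.
Proof. by rewrite /center; case: pickP => [x xD|H] //=; rewrite (eq_card0 H). Qed.

Lemma star_rel_sym : symmetric star_rel.
Proof. by move=> a b; rewrite /star_rel setUC. Qed.

Lemma star_connect_att B u w : active B -> u \in att B -> w \in att B ->
  connect star_rel u w.
Proof.
move=> actB.
have toc v : v \in att B -> connect star_rel v (center B).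
  move=> vD; have [->|nvc] := eqVneq v (center B); first exact: connect0.
  apply: connect1; rewrite /star_rel setUC; apply/bigcupP; exists B => //.
  by apply/imsetP; exists v; rewrite // in_setD1 nvc vD.
move=> uD wD; apply: (connect_trans (toc u uD)).
by rewrite (sym_connect_sym star_rel_sym) toc.
Qed.

Lemma star_vertex_att B u : u \in star_vertices -> is_block e B -> u \in B -> u \in att B.
Proof.
move=> uU bB uB; case uS: (u \in S).
  by rewrite inE uB /=; apply/existsP; exists u; rewrite uS connect0.
move: uU; rewrite inE uS /= => /bigcupP[B' /andP[bB' D2] uD'].
have [<-//|nBB] := eqVneq B' B.
case/card_gt1P: D2 => x [y [xD yD nxy]].
set b' := if x == u then y else x.
have b'D : b' \in att B' by rewrite /b'; case: (x == u).
have nbu : b' != u by rewrite /b'; case: (eqVneq x u) => [<-|//]; rewrite eq_sym.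
move: (b'D); rewrite inE => /andP[b'B' /existsP[s /andP[sS cs]]].
rewrite inE uB /=; apply/existsP; exists s; rewrite sS /=.
apply: (branch_transfer bB bB' _ uB (attachments_sub uD') b'B' nbu cs).
by rewrite eq_sym.
Qed.

(* Induction on the length of a walk from a star vertex u to a vertex of S:
   the first edge lies in a block B; the walk leaves B for good at some w,
   and u, w are attachment vertices of B. *)
Lemma star_connect n : forall u p, size p <= n -> u \in star_vertices -> path e u p ->
  last u p \in S -> connect star_rel u (last u p).
Proof.
elim: n => [|n IH] u [|x p] //= sp uU; try by move=> *; exact: connect0.
case/andP=> eux pp lS.
have [B [bB uB xB]] := edge_in_block se eux.
have [w [q [wB pq lq aq sq]]] : exists w q, [/\ w \in B, path e w q,
    last w q = last x p, all (fun v => v \notin B) q & size q <= size p].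
  case: (last_block_entry B pp) => [ap|[w [q [wB pq lq aq sq]]]].
    by exists x, p.
  by exists w, q; split => //; rewrite ltnW.
have {}sq : size q <= n by apply: leq_trans sq sp.
have [wu|wu] := eqVneq w u; first by subst w; rewrite -lq IH // lq.
have wD : w \in att B.
  rewrite inE wB /=; apply/existsP; exists (last w q); rewrite lq lS /= -lq.
  by apply: (path_connect (path_del_block pq aq)); exact: mem_last.
have uD := star_vertex_att uU bB uB.
have actB : active B by rewrite /active bB; apply/card_gt1P; exists u, w; rewrite eq_sym.
have wU : w \in star_vertices by rewrite inE; apply/orP; right; apply/bigcupP; exists B.
by apply: (connect_trans (star_connect_att actB uD wD)); rewrite -lq IH // lq.
Qed.

Lemma star_admissible : steiner_admissible e S (star_vertices, star_edges).
Proof.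
apply/and3P; split => /=.
- exact: subsetUl.
- apply/forallP => f; apply/implyP => /bigcupP[B actB /imsetP[b bD ->]].
  have cD : center B \in att B by apply: center_in; case/andP: actB => _ /ltnW.
  move: bD; rewrite in_setD1 => /andP[bc bD].
  apply/existsP; exists (center B); apply/existsP; exists b.
  case/andP: (actB) => bB _.
  rewrite eqxx (block_clique bg bB (attachments_sub cD) (attachments_sub bD)) 1?eq_sym //=.
  by rewrite !inE; apply/andP; split; apply/orP; right; apply/bigcupP; exists B.
have toS x : x \in star_vertices -> connect star_rel x s0.
  move=> xU; have := forallP cg x => /forallP/(_ s0) /connectP[p pp lp].
  by rewrite lp; apply: (star_connect (leqnn _)) => //; rewrite -lp.
apply/forallP => x; apply/implyP => xU; apply/forallP => y; apply/implyP => yU.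
by apply: (connect_trans (toS x xU)); rewrite (sym_connect_sym star_rel_sym) toS.
Qed.

Lemma card_star_edges : #|star_edges| <= \sum_(B | is_block e B) (#|att B| - 1).
Proof.
apply: leq_trans (card_bigcup_le _ _) _.
rewrite /active big_mkcondr /=; apply: leq_sum => B bB; case: ifP => // h.
have cD : center B \in att B by apply: center_in; apply: ltnW.
apply: leq_trans (leq_imset_card _ _) _.
by rewrite (cardsD1 (center B) (att B)) cD add1n subn1.
Qed.

End Upper.

Lemma steiner_dist_blocks (ie : irreflexive e) S : S != set0 ->
  steiner_dist e S = \sum_(B | is_block e B) (#|attachments e B S| - 1).
Proof.
case/set0Pn => s0 s0S; set X := \sum_(B | _) _.
have adm := star_admissible s0S.
apply/eqP; rewrite eqn_leq; apply/andP; split.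
  by apply: leq_trans (bigmin_le _ _ adm) (card_star_edges _ _).
apply: (big_ind (fun m => X <= m)).
- exact: leq_trans (steiner_lower_bound se ie bg cg adm) (max_card _).
- by move=> a b Ha Hb; rewrite leq_min Ha Hb.
by case=> U F /= admUF; apply: steiner_lower_bound admUF.
Qed.

End StarTree.

(* Choosing a subset of a disjoint union X :|: K amounts to choosing its
   traces on X and on K independently. *)
Lemma card_subsets_disjointU (T : finType) (X K : {set T}) (P Q : pred {set T}) :
  [disjoint X & K] ->
  #|[set A : {set T} | [&& A \subset X :|: K, P (A :&: X) & Q (A :&: K)]]| =
  #|[set A : {set T} | (A \subset X) && P A]| * #|[set A : {set T} | (A \subset K) && Q A]|.
Proof.
move=> dXK; rewrite -cardsX.
have trace (A1 A2 : {set T}) : A1 \subset X -> A2 \subset K ->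
    (A1 :|: A2) :&: X = A1 /\ (A1 :|: A2) :&: K = A2.
  move=> A1X A2K; split; apply/setP => x; rewrite !inE.
    case xA1: (x \in A1); first by rewrite (subsetP A1X).
    by case xA2: (x \in A2); rewrite //= (disjointFl dXK (subsetP A2K _ xA2)).
  case xA2: (x \in A2); first by rewrite (subsetP A2K) ?orbT.
  by case xA1: (x \in A1); rewrite //= (disjointFr dXK (subsetP A1X _ xA1)).
rewrite -(card_in_imset (f := fun p : {set T} * {set T} => p.1 :|: p.2)); last first.
  move=> [A1 A2] [A1' A2']; rewrite !inE /= => /andP[/andP[A1X _] /andP[A2K _]].
  case/andP=> /andP[A1X' _] /andP[A2K' _] /= E.
  have [E1 E2] := trace A1 A2 A1X A2K; have [E1' E2'] := trace A1' A2' A1X' A2K'.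
  by congr pair; [rewrite -E1 -E1' E|rewrite -E2 -E2' E].
apply: eq_card => A; rewrite inE; apply/idP/imsetP.
  case/and3P=> AXK PA QA; exists (A :&: X, A :&: K); first by rewrite !inE !subsetIr PA QA.
  by rewrite /= -setIUr; apply/esym/setIidPl.
case=> [[A1 A2]]; rewrite !inE /= => /andP[/andP[A1X PA1] /andP[A2K QA2]] ->.
have [-> ->] := trace A1 A2 A1X A2K.
by rewrite setUSS ?PA1.
Qed.

Section Components.
Variables (T : finType) (h : rel T).
Hypothesis hs : symmetric h.
Implicit Types (A S X Y : {set T}) (P : {set {set T}}).
Local Notation C := (components h).

Definition comp x := [set y | connect h x y].

Lemma comp_in x : comp x \in C.
Proof. by apply/imsetP; exists x. Qed.

Lemma comp_self x : x \in comp x.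
Proof. by rewrite inE connect0. Qed.

Lemma compE X y : X \in C -> y \in X -> X = comp y.
Proof.
case/imsetP => x _ -> yx; apply/setP => z; rewrite !inE.
move: yx; rewrite inE => cxy; apply/idP/idP => H; last exact: connect_trans cxy H.
by apply: connect_trans H; rewrite (sym_connect_sym hs).
Qed.

Lemma comp_eq X Y y : X \in C -> Y \in C -> y \in X -> y \in Y -> X = Y.
Proof. by move=> XC YC yX yY; rewrite (compE XC yX) (compE YC yY). Qed.

Lemma cover_components : cover C = setT.
Proof.
apply/setP => x; rewrite inE; apply/bigcupP.
by exists (comp x); [exact: comp_in|exact: comp_self].
Qed.

Lemma card_by_components S : #|S| = \sum_(X in C) #|S :&: X|.
Proof.
rewrite -sum1_card (partition_big comp (mem C)) /=; last by move=> x _; exact: comp_in.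
apply: eq_bigr => X XC; rewrite sum1dep_card; apply: eq_card => x; rewrite !inE.
apply/andP/andP => [[xS /eqP <-]|[xS xX]]; first by rewrite comp_self.
by rewrite -(compE XC xX).
Qed.

Lemma card_with_profile (l : {set T} -> nat) P : P \subset C ->
  #|[set A : {set T} | (A \subset cover P) && [forall X in P, #|A :&: X| == l X]]| =
  \prod_(X in P) 'C(#|X|, l X).
Proof.
have [n] := ubnP #|P|; elim: n P => // n IH P ltP PC.
have [->|[X0 X0P]] := set_0Vmem P.
  rewrite big_set0 /cover big_set0 -(cards1 (@set0 T)); apply: eq_card => A.
  rewrite !inE subset0; case: eqVneq => //= ->; apply/forallP => X.
  by rewrite inE.
set P' := P :\ X0; set K := cover P'.
have P'C : P' \subset C by apply: subset_trans PC; apply: subsetDl.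
have ltP' : #|P'| < n by move: ltP; rewrite (cardsD1 X0 P) X0P add1n ltnS.
have YK Y : Y \in P' -> Y \subset K by move=> YP; apply: bigcup_sup.
have dX0K : [disjoint X0 & K].
  rewrite -setI_eq0; apply/eqP/setP => x; rewrite !inE; apply/andP => -[xX0].
  case/bigcupP => Y; rewrite in_setD1 => /andP[YX0 YP] xY.
  by move: YX0; rewrite (comp_eq (subsetP PC _ YP) (subsetP PC _ X0P) xY xX0) eqxx.
rewrite (big_setD1 _ X0P) /= -/P' -IH // -cards_draws.
rewrite -(card_subsets_disjointU (fun A => #|A| == l X0)
  (fun R => [forall Y in P', #|R :&: Y| == l Y]) dX0K).
have -> : cover P = X0 :|: K by rewrite /cover (big_setD1 _ X0P).
have capK A Y : Y \in P' -> A :&: K :&: Y = A :&: Y.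
  by move=> YP; rewrite -setIA (setIidPr (YK Y YP)).
apply: eq_card => A; rewrite !inE.
apply/andP/and3P => [[AXK /forallP HA]|[AXK cX0 /forallP HK]]; split => //.
- exact: (implyP (HA X0) X0P).
- apply/forallP => Y; apply/implyP => YP; rewrite capK //.
  by apply: (implyP (HA Y)); exact: (subsetP (subsetDl _ _) _ YP).
apply/forallP => X; apply/implyP => XP; have [->//|XX0] := eqVneq X X0.
by rewrite -(capK A) ?(implyP (HK X)) // in_setD1 XX0.
Qed.

Definition meeting S := [set X in C | S :&: X != set0].

Lemma meeting_sub S : meeting S \subset C.
Proof. by apply/subsetP => X; rewrite inE => /andP[]. Qed.

Lemma card_meeting_le1 S X : X \in C -> S \subset X -> #|meeting S| <= 1.
Proof.
move=> XC SX; apply: leq_trans (subset_leq_card (B := [set X]) _) _; last by rewrite cards1.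
apply/subsetP => Y; rewrite !inE => /andP[YC /set0Pn[y]]; rewrite inE => /andP[yS yY].
by rewrite (comp_eq YC XC yY (subsetP SX _ yS)).
Qed.

Definition valid_profile k (l : {ffun {set T} -> 'I_k}) :=
  [forall X, (X \notin C) ==> (val (l X) == 0)] && (\sum_(X in C) val (l X) == k).

Definition spread k S := [forall X in C, #|S :&: X| < k].

Definition trace k S : {ffun {set T} -> 'I_k.+1} :=
  [ffun X => inord (if X \in C then #|S :&: X| else 0)].

Definition with_profile k (l : {ffun {set T} -> 'I_k}) :=
  [set A : {set T} | [forall X in C, #|A :&: X| == val (l X)]].

Lemma trace_valid k S : #|S| == k.+1 -> spread k.+1 S -> valid_profile (trace k S).
Proof.
move=> /eqP cS /forallP sS; apply/andP; split.
  by apply/forallP => X; apply/implyP => XC; rewrite ffunE /= (negbTE XC) inordK.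
apply/eqP; rewrite -[RHS]cS card_by_components; apply: eq_bigr => X XC.
by rewrite ffunE /= XC inordK // (implyP (sS X) XC).
Qed.

Lemma trace_fibre k l S : valid_profile l ->
  ((#|S| == k.+1) && spread k.+1 S) && (trace k S == l) = (S \in with_profile l).
Proof.
case/andP=> /forallP l0 /eqP lsum; rewrite inE; apply/idP/idP.
  case/andP => /andP[_ /forallP sS] /eqP <-.
  apply/forallP => X; apply/implyP => XC.
  by rewrite ffunE XC /= inordK // (implyP (sS X) XC).
move/forallP => H; have HX X : X \in C -> #|S :&: X| = l X.
  by move=> XC; apply/eqP; exact: (implyP (H X) XC).
rewrite -andbA; apply/and3P; split.
- by rewrite card_by_components -lsum; apply/eqP/eq_bigr => X XC; rewrite HX.
- by apply/forallP => X; apply/implyP => XC; rewrite HX.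
apply/eqP/ffunP => X; apply: val_inj; rewrite ffunE /=; case XC: (X \in C).
  by rewrite HX // inord_val.
by rewrite inordK // (eqP (implyP (l0 X) (negbT XC))).
Qed.

Lemma meeting_profile k (l : {ffun {set T} -> 'I_k}) S : S \in with_profile l ->
  #|meeting S| = #|[set X in C | val (l X) != 0]|.
Proof.
rewrite inE => /forallP H; apply: eq_card => X; rewrite !inE.
by case XC: (X \in C); rewrite //= -(eqP (implyP (H X) XC)) cards_eq0.
Qed.

Lemma sum_meeting k : 0 < k -> \sum_(S : {set T} | #|S| == k) (#|meeting S| - 1) = Nprime h k.
Proof.
case: k => // k _; rewrite /Nprime /=; case: ifP => hC; last first.
  apply: big1 => S _; apply/eqP; rewrite subn_eq0.
  by rewrite (leq_trans (subset_leq_card (meeting_sub S))) // leqNgt hC.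
rewrite (bigID (spread k.+1)) /= [X in _ + X]big1 ?addn0; last first.
  move=> S /andP[/eqP cS /forallPn[X]]; rewrite negb_imply -leqNgt => /andP[XC kle].
  apply/eqP; rewrite subn_eq0 (card_meeting_le1 XC) //; apply/setIidPl/eqP.
  by rewrite eqEcard subsetIl cS.
rewrite (partition_big (trace k) (@valid_profile k.+1)) /=; last first.
  by move=> S /andP[]; apply: trace_valid.
apply: eq_bigr => l lv; rewrite (eq_bigl (mem (with_profile l))); last first.
  by move=> S; rewrite trace_fibre.
rewrite (eq_bigr (fun _ => #|[set X in C | val (l X) != 0]| - 1)); last first.
  by move=> S /meeting_profile ->.
rewrite sum_nat_const -(card_with_profile (fun X => val (l X)) (subxx C)).
by congr (_ * _); apply: eq_card => A; rewrite !inE cover_components subsetT.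
Qed.

End Components.

(* The attachment vertices of S at B correspond bijectively (via their
   branches) to the components of G \ B that meet S. *)
Lemma card_attachments (T : finType) (e : rel T) (B S : {set T}) :
  symmetric e -> block_graph e -> connected_graph e -> is_block e B ->
  #|attachments e B S| = #|meeting (del_block_edges e B) S|.
Proof.
move=> se bg cg bB; set h := del_block_edges e B.
have hs : symmetric h := del_block_edges_sym se B.
rewrite -(card_in_imset (f := comp h) (D := attachments e B S)); last first.
  move=> b b' bD b'D E.
  apply: (block_branches_disjoint se bg bB (attachments_sub bD) (attachments_sub b'D)).
  by have := comp_self h b'; rewrite -E inE.
apply: eq_card => X; apply/imsetP/idP => [[b bD ->]|].
  rewrite inE comp_in /=; move: bD; rewrite inE => /andP[_ /existsP[s /andP[sS cs]]].
  by apply/set0Pn; exists s; rewrite !inE sS cs.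
rewrite inE => /andP[XC /set0Pn[y]]; rewrite inE => /andP[yS yX].
have [b bB' cyb] := reach_block y cg bB; exists b.
  by rewrite inE bB' /=; apply/existsP; exists y; rewrite yS /= (sym_connect_sym hs).
by apply: (comp_eq hs XC (comp_in _ _) yX); rewrite inE (sym_connect_sym hs).
Qed.

Theorem theorem1 (T : finType) (e : rel T) (k : nat) :
  simple_graph e -> connected_graph e -> block_graph e -> 2 <= k ->
  steiner_wiener e k =
  \sum_(B : {set T} | is_block e B) Nprime (del_block_edges e B) k.
Proof.
move=> [se ie] cg bg k2; rewrite /steiner_wiener.
transitivity (\sum_(S : {set T} | #|S| == k) \sum_(B : {set T} | is_block e B)
   (#|meeting (del_block_edges e B) S| - 1)).
  apply: eq_bigr => S /eqP cS.
  rewrite steiner_dist_blocks //; last by rewrite -card_gt0 cS ltnW.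
  by apply: eq_bigr => B bB; rewrite card_attachments.
rewrite exchange_big; apply: eq_bigr => B _.
exact: (sum_meeting (del_block_edges_sym se B) (ltnW k2)).
Qed.
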